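(* Let $P=\{p_1,\dots,p_k\}$ be an ordered family of real polynomials. Then there exists a polynomial $p\in P$ such that, for all except at most one value of $h\in\mathbb{Z}$, the family $(p,h)^*P$ has type strictly smaller than the type of $P$, and the polynomial $p_1(t+h)-p(t)$ is its leading polynomial (i.e. belongs to $(p,h)^*P$ and has maximal degree in it).
   Context: A family $\{p_1,\dots,p_k\}$ of real polynomials is ordered if $\deg p_1\ge\deg p_2\ge\dots\ge\deg p_k$; then $p_1$ is its leading polynomial. The van der Corput operation: for a polynomial $p$ and $h\in\mathbb{Z}$, $(p,h)^*P$ is the family $\{p_1(t+h)-p(t),\dots,p_k(t+h)-p(t),\,p_1(t)-p(t),\dots,p_k(t)-p(t)\}$ with the polynomials of degree $0$ removed. The type of a family is $(d,w_d,\dots,w_1)$, where $d$ is the largest degree of its members and $w_i$ is the number of distinct leading coefficients among members of degree exactly $i$. Types are ordered first by $d$ and then, for equal $d$, lexicographically in $(w_d,\dots,w_1)$. *)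

From HB Require Import structures.
From mathcomp Require Import all_boot all_order all_algebra.
From mathcomp Require Import reals.
Set Implicit Arguments. Unset Strict Implicit. Unset Printing Implicit Defensive.
Import Order.TTheory GRing.Theory Num.Theory.
Local Open Scope ring_scope.

Section PET.
Variable R : realType.

(* degree of a polynomial; constants (including 0) have degree 0 *)
Definition pdeg (p : {poly R}) : nat := (size p).-1.

Definition ordered_fam (P : seq {poly R}) : bool :=
  sorted (fun p q => pdeg q <= pdeg p)%N P.

Definition pshift (p : {poly R}) (h : int) : {poly R} :=
  p \Po ('X + (h%:~R)%:P).

Definition vdC (p : {poly R}) (h : int) (P : seq {poly R}) : seq {poly R} :=
  [seq q <- [seq pshift q h - p | q <- P] ++ [seq q - p | q <- P]
     | pdeg q != 0%N].

Definition fam_deg (P : seq {poly R}) : nat := \max_(q <- P) pdeg q.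

Definition fam_w (P : seq {poly R}) (i : nat) : nat :=
  size (undup [seq lead_coef q | q <- P & pdeg q == i]).

Definition fam_ws (P : seq {poly R}) : seq nat :=
  [seq fam_w P i | i <- rev (iota 1 (fam_deg P))].

Definition fam_type (P : seq {poly R}) : seq nat := fam_deg P :: fam_ws P.

End PET.

Fixpoint lex_lt (s t : seq nat) : bool :=
  match s, t with
  | x :: s', y :: t' => (x < y)%N || ((x == y) && lex_lt s' t')
  | [::], _ :: _ => true
  | _, _ => false
  end.

Definition type_lt (R : realType) (P Q : seq {poly R}) : bool :=
  (fam_deg P < fam_deg Q)%N ||
  ((fam_deg P == fam_deg Q) && lex_lt (fam_ws P) (fam_ws Q)).

From HB Require Import structures.
From mathcomp Require Import all_boot all_order all_algebra.
From mathcomp Require Import reals zify.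
Set Implicit Arguments. Unset Strict Implicit. Unset Printing Implicit Defensive.
Import Order.TTheory GRing.Theory Num.Theory.
Local Open Scope ring_scope.

(** Let d be the top degree of P and p a member of minimal degree m > 0.
    If m < d, or if all degrees equal d and p can be taken with a leading
    coefficient different from that of p_1, subtract p (for any h): members of
    degree > m keep their degree and leading coefficient, p_1(t+h) - p keeps
    degree d, and a member of degree m either drops below m or gets leading
    coefficient c - lc(p) with c <> lc(p) an old leading coefficient.  Hence
    w_i is unchanged for i > m while w_m drops.  Otherwise all members have
    degree d and leading coefficient lc(p_1); subtracting p_1 kills degree d,
    while for h <> 0 the coefficient of t^(d-1) in p_1(t+h) - p_1 is
    d h lc(p_1) <> 0, and d - 1 > 0 because the type is not (1,1). *)

Section PolyDifference.
Variable R : nzRingType.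
Implicit Types a b : {poly R}.

Lemma coefB_lead a b : size a = size b ->
  (a - b)`_(size a).-1 = lead_coef a - lead_coef b.
Proof. by move=> eq_size; rewrite coefB /lead_coef eq_size. Qed.

Lemma size_polyB_lead_eq a b : size a = size b -> lead_coef a = lead_coef b ->
  a != 0 -> (size (a - b)%R < size a)%N.
Proof.
move=> eq_size eq_lead nz_a; have a_gt0 : (0 < size a)%N by rewrite size_poly_gt0.
rewrite -(prednK a_gt0) ltnS; apply/leq_sizeP => j.
rewrite leq_eqVlt => /orP[/eqP <-|lt_j]; first by rewrite coefB_lead // eq_lead subrr.
by rewrite coefB !nth_default ?subrr -?eq_size // -(prednK a_gt0).
Qed.

Lemma size_polyB_lead_neq a b : size a = size b -> lead_coef a != lead_coef b ->
  size (a - b) = size a.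
Proof.
move=> eq_size neq_lead; apply/anti_leq/andP; split.
  by rewrite -(maxnn (size a)) {2}eq_size -(size_polyN b) size_polyD.
have : (a - b)`_(size a).-1 != 0 by rewrite coefB_lead // subr_eq0.
case: (size a) => // n; rewrite ltnNge; apply: contra => /leq_sizeP -> //.
Qed.

Lemma lead_coefB_lead_neq a b : size a = size b -> lead_coef a != lead_coef b ->
  lead_coef (a - b) = lead_coef a - lead_coef b.
Proof.
by move=> eq_size neq_lead; rewrite /lead_coef size_polyB_lead_neq // coefB_lead.
Qed.

End PolyDifference.

Section ExpXaddC.
Variable R : nzRingType.
Implicit Types c : R.

Lemma size_exp_XaddC n c : size (('X + c%:P) ^+ n) = n.+1.
Proof. by rewrite -[c]opprK polyCN size_exp_XsubC. Qed.

Lemma coef_exp_XaddC_top n c : (('X + c%:P) ^+ n)`_n = 1.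
Proof.
have /monicP := monic_exp n (monicXaddC c).
by rewrite /lead_coef size_exp_XaddC.
Qed.

Lemma coef_exp_XaddC_penult n c : (('X + c%:P) ^+ n.+1)`_n = n.+1%:R * c.
Proof.
elim: n => [|n IHn]; first by rewrite expr1 coefD coefX coefC add0r mul1r.
rewrite exprS mulrDl coefD coefXM coefCM IHn coef_exp_XaddC_top.
by rewrite mulr1 [n.+2%:R]mulrSr mulrDl mul1r.
Qed.

Lemma coef_exp_XaddC_small n i c : (i < n)%N -> (('X + c%:P) ^+ i)`_n = 0.
Proof. by move=> lt_in; rewrite nth_default // size_exp_XaddC. Qed.

End ExpXaddC.

Section CompXaddC.
Variable R : idomainType.
Implicit Types (c : R) (q : {poly R}).

Lemma size_comp_XaddC c q : size (q \Po ('X + c%:P)) = size q.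
Proof. by rewrite size_comp_poly2 // size_XaddC. Qed.

Lemma lead_coef_comp_XaddC c q : lead_coef (q \Po ('X + c%:P)) = lead_coef q.
Proof. by rewrite lead_coef_comp ?size_XaddC // lead_coefXaddC expr1n mulr1. Qed.

Lemma coef_comp_XaddC_penult c q n : size q = n.+2 ->
  (q \Po ('X + c%:P))`_n = q`_n + lead_coef q * (n.+1%:R * c).
Proof.
move=> size_q; rewrite coef_comp_poly size_q !big_ord_recr /=.
rewrite big1 => [|i _]; last by rewrite coef_exp_XaddC_small ?mulr0.
by rewrite add0r coef_exp_XaddC_top mulr1 coef_exp_XaddC_penult /lead_coef size_q.
Qed.

End CompXaddC.

Section ShiftDifference.
Variable R : numDomainType.

Lemma size_comp_XaddC_sub (c : R) (q : {poly R}) n : c != 0 -> size q = n.+2 ->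
  size (q \Po ('X + c%:P) - q) = n.+1.
Proof.
move=> nz_c size_q; apply/anti_leq/andP; split.
  rewrite -ltnS -size_q -(size_comp_XaddC c q) size_polyB_lead_eq //.
    by rewrite size_comp_XaddC.
  by rewrite lead_coef_comp_XaddC.
  by rewrite -size_poly_gt0 size_comp_XaddC size_q.
have : (q \Po ('X + c%:P) - q)`_n != 0.
  rewrite coefB coef_comp_XaddC_penult // addrC addKr mulf_neq0 ?mulf_neq0 //.
    by rewrite lead_coef_eq0 -size_poly_gt0 size_q.
  by rewrite pnatr_eq0.
by rewrite ltnNge; apply: contra => /leq_sizeP ->.
Qed.

End ShiftDifference.

Section Degrees.
Variable R : realType.
Implicit Types (p q s : {poly R}) (h : int).

Lemma size_pdeg p : (0 < pdeg p)%N -> size p = (pdeg p).+1.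
Proof. by rewrite /pdeg; case: (size p). Qed.

Lemma pdeg_pshift q h : pdeg (pshift q h) = pdeg q.
Proof. by rewrite /pdeg /pshift size_comp_XaddC. Qed.

Lemma lead_coef_pshift q h : lead_coef (pshift q h) = lead_coef q.
Proof. exact: lead_coef_comp_XaddC. Qed.

Lemma pdeg_polyB_le s p : (pdeg (s - p) <= maxn (pdeg s) (pdeg p))%N.
Proof.
rewrite /pdeg -!subn1 -subn_maxl leq_sub2r // -(size_polyN p); exact: size_polyD.
Qed.

Lemma pdeg_polyBl s p : (pdeg p < pdeg s)%N ->
  pdeg (s - p) = pdeg s /\ lead_coef (s - p) = lead_coef s.
Proof.
move=> lt_ps; have lt_size : (size p < size s)%N by move: lt_ps; rewrite /pdeg; lia.
by rewrite /pdeg size_polyDl ?lead_coefDl ?size_polyN.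
Qed.

Lemma pdeg_polyB_lead_eq s p : (0 < pdeg s)%N -> pdeg s = pdeg p ->
  lead_coef s = lead_coef p -> (pdeg (s - p) < pdeg s)%N.
Proof.
move=> s_gt0 eq_deg eq_lead; have eq_size : size s = size p by rewrite !size_pdeg -?eq_deg.
have nz_s : s != 0 by rewrite -size_poly_gt0 size_pdeg.
have := size_polyB_lead_eq eq_size eq_lead nz_s; move: s_gt0; rewrite /pdeg.
(* [set] identifies [size] terms elaborated through different, convertible
   ring instances, which [lia] would otherwise treat as distinct atoms. *)
set a := size (s - p); set b := size s; lia.
Qed.

Lemma pdeg_polyB_lead_neq s p : (0 < pdeg s)%N -> pdeg s = pdeg p ->
  lead_coef s != lead_coef p ->
  pdeg (s - p) = pdeg s /\ lead_coef (s - p) = lead_coef s - lead_coef p.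
Proof.
move=> s_gt0 eq_deg neq_lead; have eq_size : size s = size p by rewrite !size_pdeg -?eq_deg.
by rewrite /pdeg size_polyB_lead_neq // lead_coefB_lead_neq.
Qed.

Lemma pdeg_pshift_sub q h n : h != 0 -> pdeg q = n.+1 -> pdeg (pshift q h - q) = n.
Proof.
move=> nz_h deg_q; rewrite /pdeg /pshift (@size_comp_XaddC_sub _ _ _ n) ?intr_eq0 //.
by rewrite size_pdeg deg_q.
Qed.

End Degrees.

Lemma ex_argmin_seq (T : eqType) (f : T -> nat) (s : seq T) x : x \in s ->
  exists2 y, y \in s & forall z, z \in s -> (f y <= f z)%N.
Proof.
move=> x_in; have ex_val : exists m, has (fun y => f y == m) s.
  by exists (f x); apply/hasP; exists x.
case: (ex_minnP ex_val) => m /hasP[y y_in /eqP f_y] m_min.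
by exists y => // z z_in; rewrite f_y m_min //; apply/hasP; exists z.
Qed.

Lemma lex_lt_map_rev_iota (f g : nat -> nat) m d : (0 < m <= d)%N ->
  (forall i, (m < i <= d)%N -> f i = g i) -> (f m < g m)%N ->
  lex_lt [seq f i | i <- rev (iota 1 d)] [seq g i | i <- rev (iota 1 d)].
Proof.
elim: d => [|d IHd] m_range eq_fg lt_fg_m; first by lia.
rewrite -[d.+1]addn1 iotaD rev_cat /= add1n.
have [eq_md|neq_md] := eqVneq m d.+1; first by rewrite -eq_md lt_fg_m.
rewrite eq_fg ?ltnn ?eqxx /=; last by lia.
by apply: IHd => // [|i i_range]; [lia | apply: eq_fg; lia].
Qed.

Section Families.
Variable R : realType.
Implicit Types (p q r : {poly R}) (P Q : seq {poly R}).

Definition lead_coefs_at Q i : seq R := [seq lead_coef q | q <- Q & pdeg q == i].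

Lemma lead_coefs_atP Q i c :
  reflect (exists2 q, q \in Q & pdeg q = i /\ lead_coef q = c) (c \in lead_coefs_at Q i).
Proof.
apply: (iffP mapP) => [[q]|[q q_in [deg_q <-]]].
  by rewrite mem_filter => /andP[/eqP deg_q q_in ->]; exists q.
by exists q; rewrite // mem_filter deg_q eqxx.
Qed.

Lemma fam_w_eq_mem P Q i : lead_coefs_at Q i =i lead_coefs_at P i -> fam_w Q i = fam_w P i.
Proof.
move=> eq_mem; apply/perm_size/uniq_perm; rewrite ?undup_uniq // => c.
by rewrite !mem_undup eq_mem.
Qed.

Lemma fam_w_lt_sub_map P Q i c (f : R -> R) : c \in lead_coefs_at P i ->
  {subset lead_coefs_at Q i <= [seq f x | x <- lead_coefs_at P i & x != c]} ->
  (fam_w Q i < fam_w P i)%N.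
Proof.
move=> c_in sub_Q; rewrite /fam_w -/(lead_coefs_at Q i) -/(lead_coefs_at P i).
set LP := undup (lead_coefs_at P i).
have c_LP : c \in LP by rewrite mem_undup.
apply: (@leq_trans (size [seq f x | x <- rem c LP]).+1).
  rewrite ltnS uniq_leq_size ?undup_uniq // => y; rewrite mem_undup => /sub_Q.
  case/mapP=> x; rewrite mem_filter => x_in ->.
  by rewrite rem_filter ?undup_uniq // map_f // mem_filter mem_undup.
by rewrite size_map size_rem //; case: (LP) c_LP.
Qed.

Lemma pdeg_le_fam_deg Q r : r \in Q -> (pdeg r <= fam_deg Q)%N.
Proof. by move=> r_in; apply: (@leq_bigmax_seq _ Q xpredT). Qed.

Lemma fam_deg_le Q n : (forall r, r \in Q -> pdeg r <= n)%N -> (fam_deg Q <= n)%N.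
Proof. by move=> le_n; apply/bigmax_leqP_seq => r r_in _; apply: le_n. Qed.

Lemma fam_deg_max Q r : r \in Q -> (forall q, q \in Q -> pdeg q <= pdeg r)%N ->
  fam_deg Q = pdeg r.
Proof. by move=> r_in le_r; apply/anti_leq; rewrite fam_deg_le // pdeg_le_fam_deg. Qed.

Lemma fam_w_same_lead P p i : p \in P -> pdeg p = i ->
  (forall q, q \in P -> pdeg q = i -> lead_coef q = lead_coef p) -> fam_w P i = 1%N.
Proof.
move=> p_in deg_p same_lead; rewrite /fam_w -/(lead_coefs_at P i).
rewrite (@perm_size _ _ [:: lead_coef p]) //; apply: uniq_perm; rewrite ?undup_uniq // => c.
rewrite mem_undup inE; apply/lead_coefs_atP/eqP => [[q q_in [deg_q <-]]|->].
  exact: same_lead.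
by exists p.
Qed.

Lemma type_lt_fam_w Q P m : fam_deg Q = fam_deg P -> (0 < m <= fam_deg P)%N ->
  (forall i, (m < i <= fam_deg P)%N -> fam_w Q i = fam_w P i) ->
  (fam_w Q m < fam_w P m)%N -> type_lt Q P.
Proof.
move=> eq_deg m_range eq_w lt_w; rewrite /type_lt /fam_ws eq_deg eqxx ltnn /=.
exact: (lex_lt_map_rev_iota m_range eq_w lt_w).
Qed.

End Families.

Section VanDerCorput.
Variable R : realType.
Implicit Types (p q r : {poly R}) (P : seq {poly R}) (h : int).

Lemma mem_vdC_inv p h P r : r \in vdC p h P ->
  exists2 q, q \in P & exists s, [/\ r = s - p, pdeg s = pdeg q & lead_coef s = lead_coef q].
Proof.
rewrite mem_filter mem_cat => /andP[_ /orP[]] /mapP[q q_in ->]; exists q => //.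
  by exists (pshift q h); rewrite pdeg_pshift lead_coef_pshift.
by exists q.
Qed.

Lemma mem_vdC_pshift p h P q : q \in P -> pdeg (pshift q h - p) != 0%N ->
  pshift q h - p \in vdC p h P.
Proof.
by move=> q_in deg_nz; rewrite mem_filter deg_nz mem_cat (map_f (fun q => pshift q h - p)).
Qed.

Lemma mem_vdC p h P q : q \in P -> pdeg (q - p) != 0%N -> q - p \in vdC p h P.
Proof.
by move=> q_in deg_nz; rewrite mem_filter deg_nz mem_cat (map_f (fun q => q - p)) ?orbT.
Qed.

Definition vdC_reduces P p1 p h : Prop :=
  type_lt (vdC p h P) P /\ pshift p1 h - p \in vdC p h P /\
  all (fun q => pdeg q <= pdeg (pshift p1 h - p))%N (vdC p h P).

End VanDerCorput.

Section SubtractMinimal.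
Variables (R : realType) (P : seq {poly R}) (p p1 : {poly R}) (h : int).
Hypotheses (p_in : p \in P) (p1_in : p1 \in P) (p_gt0 : (0 < pdeg p)%N).
Hypothesis p_min : forall q, q \in P -> (pdeg p <= pdeg q)%N.
Hypothesis p1_max : forall q, q \in P -> (pdeg q <= pdeg p1)%N.
Hypothesis p_neq_p1 : (pdeg p < pdeg p1)%N || (lead_coef p != lead_coef p1).

Lemma pdeg_vdC_min_head : pdeg (pshift p1 h - p) = pdeg p1.
Proof.
have [lt_p_p1|] := ltnP (pdeg p) (pdeg p1).
  by have [] := @pdeg_polyBl _ (pshift p1 h) p; rewrite pdeg_pshift.
rewrite -(pdeg_pshift p1 h) => le_p1_p.
have eq_deg : pdeg (pshift p1 h) = pdeg p by apply/anti_leq; rewrite le_p1_p pdeg_pshift p_min.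
have neq_lead : lead_coef (pshift p1 h) != lead_coef p.
  by move: p_neq_p1; rewrite -(pdeg_pshift p1 h) eq_deg ltnn eq_sym lead_coef_pshift.
have s_gt0 : (0 < pdeg (pshift p1 h))%N by rewrite eq_deg.
by have [-> _] := pdeg_polyB_lead_neq s_gt0 eq_deg neq_lead; rewrite pdeg_pshift.
Qed.

Lemma mem_vdC_min_head : pshift p1 h - p \in vdC p h P.
Proof.
apply: mem_vdC_pshift => //; rewrite pdeg_vdC_min_head -lt0n.
exact: leq_trans p_gt0 (p1_max p_in).
Qed.

Lemma pdeg_vdC_min_le r : r \in vdC p h P -> (pdeg r <= pdeg p1)%N.
Proof.
case/mem_vdC_inv=> q q_in [s [-> deg_s _]].
by rewrite (leq_trans (pdeg_polyB_le s p)) // geq_max deg_s !p1_max.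
Qed.

Lemma fam_deg_vdC_min : fam_deg (vdC p h P) = pdeg p1.
Proof.
by rewrite -pdeg_vdC_min_head; apply: fam_deg_max mem_vdC_min_head _ => r;
  rewrite pdeg_vdC_min_head; apply: pdeg_vdC_min_le.
Qed.

Lemma lead_coefs_vdC_min_gt i : (pdeg p < i)%N ->
  lead_coefs_at (vdC p h P) i =i lead_coefs_at P i.
Proof.
move=> lt_p_i c; apply/lead_coefs_atP/lead_coefs_atP => [[r]|[q q_in [deg_q <-]]].
  case/mem_vdC_inv=> q q_in [s [-> deg_s lead_s]] [deg_r <-]; exists q => //.
  have [lt_p_s|le_s_p] := ltnP (pdeg p) (pdeg s).
    by have [deg_sp ->] := pdeg_polyBl lt_p_s; rewrite -deg_s -deg_sp.
  have lt_s_i := leq_ltn_trans le_s_p lt_p_i.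
  by move: (pdeg_polyB_le s p); rewrite deg_r leq_max leqNgt lt_s_i leqNgt lt_p_i.
have lt_p_q : (pdeg p < pdeg q)%N by rewrite deg_q.
have [deg_qp lead_qp] := pdeg_polyBl lt_p_q.
exists (q - p); last by rewrite deg_qp lead_qp.
apply: mem_vdC => //; rewrite deg_qp -lt0n; exact: leq_trans p_gt0 (p_min q_in).
Qed.

Lemma lead_coefs_vdC_min_eq : {subset lead_coefs_at (vdC p h P) (pdeg p) <=
  [seq x - lead_coef p | x <- lead_coefs_at P (pdeg p) & x != lead_coef p]}.
Proof.
move=> c /lead_coefs_atP[r]; case/mem_vdC_inv=> q q_in [s [-> deg_s lead_s]] [deg_r <-].
have [lt_p_s|] := ltnP (pdeg p) (pdeg s).
  by have [deg_sp _] := pdeg_polyBl lt_p_s; move: lt_p_s; rewrite -deg_sp deg_r ltnn.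
rewrite deg_s => le_q_p; have eq_deg : pdeg s = pdeg p.
  by rewrite deg_s; apply/anti_leq; rewrite le_q_p p_min.
have s_gt0 : (0 < pdeg s)%N by rewrite eq_deg.
have [eq_lead|neq_lead] := eqVneq (lead_coef s) (lead_coef p).
  by move: (pdeg_polyB_lead_eq s_gt0 eq_deg eq_lead); rewrite deg_r eq_deg ltnn.
have [_ ->] := pdeg_polyB_lead_neq s_gt0 eq_deg neq_lead.
rewrite (map_f (fun x => x - lead_coef p)) // mem_filter neq_lead; apply/lead_coefs_atP.
by exists q; rewrite -?deg_s.
Qed.

Lemma type_lt_vdC_min : type_lt (vdC p h P) P.
Proof.
have deg_P : fam_deg P = pdeg p1 by apply: fam_deg_max.
apply: (@type_lt_fam_w _ _ _ (pdeg p)); rewrite ?fam_deg_vdC_min ?deg_P ?p_gt0 ?p1_max //.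
  by move=> i /andP[lt_p_i _]; apply/fam_w_eq_mem/lead_coefs_vdC_min_gt.
apply: fam_w_lt_sub_map lead_coefs_vdC_min_eq.
by apply/lead_coefs_atP; exists p.
Qed.

Lemma vdC_reduces_min : vdC_reduces P p1 p h.
Proof.
split; first exact: type_lt_vdC_min.
split; first exact: mem_vdC_min_head.
by apply/allP => r /pdeg_vdC_min_le; rewrite pdeg_vdC_min_head.
Qed.

End SubtractMinimal.

Section SubtractHead.
Variables (R : realType) (P : seq {poly R}) (p1 : {poly R}) (n : nat) (h : int).
Hypotheses (p1_in : p1 \in P) (n_gt0 : (0 < n)%N) (h_nz : h != 0).
Hypothesis same_deg : forall q, q \in P -> pdeg q = n.+1.
Hypothesis same_lead : forall q, q \in P -> lead_coef q = lead_coef p1.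

Lemma pdeg_vdC_same_le r : r \in vdC p1 h P -> (pdeg r <= n)%N.
Proof.
case/mem_vdC_inv=> q q_in [s [-> deg_s lead_s]].
have deg_s_p1 : pdeg s = pdeg p1 by rewrite deg_s !same_deg.
have lead_s_p1 : lead_coef s = lead_coef p1 by rewrite lead_s same_lead.
by rewrite -ltnS -(same_deg q_in) -deg_s pdeg_polyB_lead_eq // deg_s same_deg.
Qed.

Lemma pdeg_vdC_same_head : pdeg (pshift p1 h - p1) = n.
Proof. exact: pdeg_pshift_sub h_nz (same_deg p1_in). Qed.

Lemma vdC_reduces_same : vdC_reduces P p1 p1 h.
Proof.
split.
  apply/orP; left; rewrite (fam_deg_max p1_in) => [|q q_in]; last by rewrite !same_deg.
  by rewrite same_deg // ltnS fam_deg_le // => r /pdeg_vdC_same_le.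
split; first by rewrite mem_vdC_pshift // pdeg_vdC_same_head -lt0n.
by apply/allP => r /pdeg_vdC_same_le; rewrite pdeg_vdC_same_head.
Qed.

End SubtractHead.

Lemma ordered_fam_head_max (R : realType) (p1 : {poly R}) P :
  ordered_fam (p1 :: P) -> forall q, q \in p1 :: P -> (pdeg q <= pdeg p1)%N.
Proof.
have le_trans : transitive (fun p q : {poly R} => pdeg q <= pdeg p)%N.
  by move=> ? ? ? le1 le2; apply: leq_trans le2 le1.
move=> /(order_path_min le_trans) /allP le_p1 q; rewrite inE.
by case/orP=> [/eqP -> //|/le_p1].
Qed.

Lemma fam_type_deg1_same_lead (R : realType) (P : seq {poly R}) p : p \in P ->
  (forall q, q \in P -> pdeg q = 1%N /\ lead_coef q = lead_coef p) -> fam_type P = [:: 1; 1]%N.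
Proof.
move=> p_in deg1; have [deg_p _] := deg1 p p_in.
have deg_P : fam_deg P = 1%N by rewrite (fam_deg_max p_in) // => q /deg1[-> _]; rewrite deg_p.
by rewrite /fam_type /fam_ws deg_P /= (fam_w_same_lead p_in deg_p) // => q /deg1[_ ->].
Qed.

Theorem proposition4p7 (R : realType) (P : seq {poly R}) :
  ordered_fam P ->
  P != [::] ->
  all (fun q => 0 < pdeg q)%N P ->
  fam_type P != [:: 1%N; 1%N] ->
  exists2 p, p \in P &
    exists h0 : int, forall h : int, h != h0 ->
      type_lt (vdC p h P) P /\
      pshift (head 0 P) h - p \in vdC p h P /\
      all (fun q => (pdeg q <= pdeg (pshift (head 0%R P) h - p))%N) (vdC p h P).
Proof.
case: P => [//|p1 P'] /ordered_fam_head_max p1_max _ /allP deg_gt0 type_neq /=.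
set P := p1 :: P' in p1_max deg_gt0 type_neq *.
have p1_in : p1 \in P := mem_head p1 P'.
have [p p_in p_min] := ex_argmin_seq (@pdeg R) p1_in.
have [lt_p_p1|le_p1_p] := ltnP (pdeg p) (pdeg p1).
  by exists p => //; exists 0 => h _; apply: vdC_reduces_min; rewrite ?deg_gt0 ?lt_p_p1.
have same_deg q : q \in P -> pdeg q = pdeg p1.
  by move=> q_in; apply/anti_leq; rewrite p1_max // (leq_trans le_p1_p) ?p_min.
have [/hasP[q q_in neq_lead]|/hasPn same_lead] :=
  boolP (has (fun q => lead_coef q != lead_coef p1) P).
  exists q => //; exists 0 => h _; apply: vdC_reduces_min; rewrite ?neq_lead ?orbT //.
    by rewrite same_deg // -(same_deg p) ?deg_gt0.
  by move=> r r_in; rewrite !same_deg.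
have {}same_lead q : q \in P -> lead_coef q = lead_coef p1.
  by move/same_lead/negPn/eqP.
have [n deg_p1] : exists n, pdeg p1 = n.+1 by exists (pdeg p1).-1; rewrite prednK ?deg_gt0.
have n_gt0 : (0 < n)%N.
  rewrite lt0n; apply: contraNneq type_neq => n0; apply/eqP/(fam_type_deg1_same_lead p1_in).
  by move=> q q_in; rewrite same_deg // same_lead // deg_p1 n0.
exists p1 => //; exists 0 => h h_nz; apply: vdC_reduces_same n_gt0 h_nz _ _ => //.
by move=> q q_in; rewrite same_deg.
Qed.
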